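(* Let $n,K\ge1$, $\varepsilon>0$, $\Delta^{\inf}\in\mathbb{R}$, $c\ge0$ (playing the role of $f(x^0)-f^{\inf}$), ${\bf L}\in\mathbb{S}^d_{++}$, ${\bf L}_1,\dots,{\bf L}_n\in\mathbb{S}^d_{++}$, and let ${\bf S}_1,\dots,{\bf S}_n$ be random matrices in $\mathbb{S}^d_+$ with $\mathbb{E}[{\bf S}_i]={\bf I}_d$ and finite second moments. For ${\bf D}\in\mathbb{S}^d_{++}$ let $\lambda_{{\bf D}}:=\max_i\lambda_{\max}\big(\mathbb{E}[{\bf L}_i^{1/2}({\bf S}_i-{\bf I}_d){\bf D}{\bf L}{\bf D}({\bf S}_i-{\bf I}_d){\bf L}_i^{1/2}]\big)$. Then the set of ${\bf D}\in\mathbb{S}^d_{++}$ satisfying $${\bf D}{\bf L}{\bf D}\preceq{\bf D},\qquad\lambda_{{\bf D}}\le\frac nK,\qquad 4\Delta^{\inf}\lambda_{{\bf D}}\le n\varepsilon^2\det({\bf D})^{1/d},\qquad K\ge\frac{12c}{\det({\bf D})^{1/d}\varepsilon^2}$$ is convex.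
   Context: $\mathbb{S}^d_{+}$/$\mathbb{S}^d_{++}$: symmetric positive semidefinite/definite $d\times d$ matrices; $\preceq$ is the Loewner order; $\lambda_{\max}$ is the largest eigenvalue. *)

From HB Require Import structures.
From mathcomp Require Import all_boot all_order all_algebra.
From mathcomp Require Import all_classical all_reals all_analysis.
Set Implicit Arguments. Unset Strict Implicit. Unset Printing Implicit Defensive.
Import Order.TTheory GRing.Theory Num.Theory.
Local Open Scope ring_scope.
Local Open Scope classical_set_scope.

Section MatrixDefs.
Variable R : realType.

Definition symmx d (A : 'M[R]_d) : Prop := A^T = A.

Definition psdmx d (A : 'M[R]_d) : Prop :=
  symmx A /\ forall x : 'cV[R]_d, 0 <= (x^T *m A *m x) 0 0.

Definition pdmx d (A : 'M[R]_d) : Prop :=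
  symmx A /\ forall x : 'cV[R]_d, x != 0 -> 0 < (x^T *m A *m x) 0 0.

Definition loewner_le d (A B : 'M[R]_d) : Prop := psdmx (B - A).

(* the PSD square root A^{1/2} (unique PSD B with B*B = A when A is PSD) *)
Definition sqrtmx d (A : 'M[R]_d) : 'M[R]_d :=
  match pselect (exists B : 'M[R]_d, psdmx B /\ B *m B = A) with
  | left e => projT1 (cid e)
  | right _ => 0
  end.

Definition lambda_max d (A : 'M[R]_d) : R :=
  sup [set a : R | eigenvalue A a].

Definition mexpect dT (T : measurableType dT) (P : probability T R) d
  (X : T -> 'M[R]_d) : 'M[R]_d :=
  \matrix_(j, k) Rintegral P setT (fun w => X w j k).

Definition lambdaD dT (T : measurableType dT) (P : probability T R) d n
  (L : 'M[R]_d) (Ls : 'I_n -> 'M[R]_d) (S : 'I_n -> T -> 'M[R]_d)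
  (D : 'M[R]_d) : R :=
  sup [set lambda_max (mexpect P (fun w =>
          sqrtmx (Ls i) *m (S i w - 1%:M) *m D *m L *m D *m (S i w - 1%:M)
            *m sqrtmx (Ls i))) | i in [set: 'I_n]].

Definition feasible dT (T : measurableType dT) (P : probability T R) d n (K : nat)
  (eps Dinf c : R) (L : 'M[R]_d) (Ls : 'I_n -> 'M[R]_d)
  (S : 'I_n -> T -> 'M[R]_d) (D : 'M[R]_d) : Prop :=
  [/\ pdmx D,
      loewner_le (D *m L *m D) D,
      lambdaD P L Ls S D <= n%:R / K%:R,
      4 * Dinf * lambdaD P L Ls S D <= n%:R * eps ^+ 2 * powR (\det D) d%:R^-1
    & 12 * c / (powR (\det D) d%:R^-1 * eps ^+ 2) <= K%:R].

Definition convex_mxset d (A : 'M[R]_d -> Prop) : Prop :=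
  forall D1 D2 (t : R), A D1 -> A D2 -> 0 <= t <= 1 ->
    A (t *: D1 + (1 - t) *: D2).

End MatrixDefs.

From HB Require Import structures.
From mathcomp Require Import all_boot all_order all_algebra.
From mathcomp Require Import all_classical all_reals all_analysis.
From mathcomp Require Import complex.
From mathcomp Require Import ring lra.
Set Implicit Arguments. Unset Strict Implicit. Unset Printing Implicit Defensive.
Import Order.TTheory GRing.Theory Num.Theory.
Local Open Scope ring_scope.
Local Open Scope classical_set_scope.

(* Each constraint cuts out a convex set.  The map D |-> D L D is matrix convex,
   since t D1 L D1 + (1 - t) D2 L D2 - Dt L Dt = t (1 - t) (D1 - D2) L (D1 - D2)
   is positive semidefinite; this preserves D L D <= D, and after conjugating by
   Z_i = (S_i - I) L_i^(1/2) and taking expectations it makes lambda_D a convex,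
   nonnegative function of D, because lambda_max is monotone and sublinear.
   Dually, D |-> det(D)^(1/d) is concave by Minkowski's determinant inequality:
   diagonalize D1 and D2 simultaneously and use that the geometric mean is
   superadditive, which follows from AM-GM.  The third constraint bounds a
   nonnegative convex function by a concave one (it is void when Dinf < 0), and
   the fourth is a superlevel set of the concave function. *)

Section QuadraticForm.
Variable R : realFieldType.

Definition qform d (A : 'M[R]_d) (x : 'cV[R]_d) : R := (x^T *m A *m x) 0 0.

Definition sqnorm d (x : 'cV[R]_d) : R := (x^T *m x) 0 0.

Lemma qformD d (A B : 'M[R]_d) x : qform (A + B) x = qform A x + qform B x.
Proof. by rewrite /qform mulmxDr mulmxDl mxE. Qed.

Lemma qformB d (A B : 'M[R]_d) x : qform (A - B) x = qform A x - qform B x.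
Proof. by rewrite /qform mulmxBr mulmxBl !mxE. Qed.

Lemma qformZ d a (A : 'M[R]_d) x : qform (a *: A) x = a * qform A x.
Proof. by rewrite /qform -scalemxAr -scalemxAl mxE. Qed.

Lemma qformE d (A : 'M[R]_d) x :
  qform A x = \sum_k \sum_j A j k * (x j 0 * x k 0).
Proof.
rewrite /qform mxE; apply: eq_bigr => k _; rewrite mxE mulr_suml.
by apply: eq_bigr => j _; rewrite mxE; ring.
Qed.

Lemma qform_congr m d (A : 'M[R]_d) (M : 'M[R]_(d, m)) x :
  qform (M^T *m A *m M) x = qform A (M *m x).
Proof. by rewrite /qform trmx_mul !mulmxA. Qed.

Lemma sqnormE d (x : 'cV[R]_d) : sqnorm x = \sum_j x j 0 ^+ 2.
Proof. by rewrite /sqnorm mxE; apply: eq_bigr => j _; rewrite mxE expr2. Qed.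

Lemma sqnorm_gt0 d (x : 'cV[R]_d) : x != 0 -> 0 < sqnorm x.
Proof.
move=> x_neq0; rewrite sqnormE lt_def sumr_ge0 ?andbT => [|j _]; last exact: sqr_ge0.
apply: contra x_neq0 => /eqP/psumr_eq0P x0; apply/eqP/matrixP => i j.
by rewrite ord1 mxE; apply/eqP; rewrite -sqrf_eq0 x0 // => k _; rewrite sqr_ge0.
Qed.

Lemma qform_convex d (L : 'M[R]_d) (u v : 'cV[R]_d) t :
  L^T = L -> (forall x, 0 <= qform L x) -> 0 <= t <= 1 ->
  qform L (t *: u + (1 - t) *: v) <= t * qform L u + (1 - t) * qform L v.
Proof.
move=> Lsym Lpsd /andP[t_ge0 t_le1].
pose b (x y : 'cV[R]_d) := (x^T *m L *m y) 0 0.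
have bC x y : b x y = b y x.
  rewrite /b (_ : y^T *m L *m x = (x^T *m L *m y)^T) ?mxE //.
  by rewrite !trmx_mul trmxK Lsym mulmxA.
have qE (a c : R) : qform L (a *: u + c *: v) =
    a ^+ 2 * qform L u + 2 * a * c * b u v + c ^+ 2 * qform L v.
  rewrite /qform [(_ + _)^T]linearD /= ![(_ *: _)^T]linearZ /=.
  rewrite !mulmxDl !mulmxDr -!scalemxAl -!scalemxAr.
  rewrite ![fun_of_matrix (_ + _) _ _]mxE ![fun_of_matrix (_ *: _) _ _]mxE.
  by rewrite -/(b u v) -/(b v u) (bC v u) -/(qform L u) -/(qform L v); ring.
have := Lpsd (1 *: u + (-1) *: v); rewrite !qE => uv_ge0.
have s_ge0 : 0 <= 1 - t by rewrite subr_ge0.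
have := mulr_ge0 (mulr_ge0 t_ge0 s_ge0) uv_ge0; nra.
Qed.

Lemma qform_sandwich_convex d (L D1 D2 : 'M[R]_d) t x :
  L^T = L -> (forall y, 0 <= qform L y) -> D1^T = D1 -> D2^T = D2 -> 0 <= t <= 1 ->
  qform ((t *: D1 + (1 - t) *: D2) *m L *m (t *: D1 + (1 - t) *: D2)) x <=
    t * qform (D1 *m L *m D1) x + (1 - t) * qform (D2 *m L *m D2) x.
Proof.
move=> Lsym Lpsd D1sym D2sym t01.
have sandwichE D : D^T = D -> qform (D *m L *m D) x = qform L (D *m x).
  by move=> Dsym; rewrite -{1}Dsym qform_congr.
rewrite !sandwichE //; last by rewrite linearD /= !linearZ /= D1sym D2sym.
by rewrite mulmxDl -!scalemxAl qform_convex.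
Qed.

Lemma pd_qform_ge0 d (A : 'M[R]_d) :
  (forall x, x != 0 -> 0 < qform A x) -> forall x, 0 <= qform A x.
Proof.
move=> Apd x; have [->|/Apd/ltW//] := eqVneq x 0.
by rewrite /qform mulmx0 mxE.
Qed.

Lemma eigenvalue_qform d (A : 'M[R]_d) a : eigenvalue A a ->
  exists2 x, x != 0 & qform A x = a * sqnorm x.
Proof.
move=> /eigenvalueP[v vA v_neq0]; exists v^T; first by rewrite trmx_eq0.
by rewrite /qform /sqnorm trmxK vA -scalemxAl mxE.
Qed.

Lemma eigenvalue_le d (A : 'M[R]_d) a b : eigenvalue A a ->
  (forall x, qform A x <= b * sqnorm x) -> a <= b.
Proof.
by move=> /eigenvalue_qform[x /sqnorm_gt0 x_gt0 Ax] /(_ x); rewrite Ax ler_pM2r.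
Qed.

Lemma eigenvalue_pd_gt0 d (A : 'M[R]_d) a : eigenvalue A a ->
  (forall x, x != 0 -> 0 < qform A x) -> 0 < a.
Proof.
move=> /eigenvalue_qform[x x_neq0 Ax] /(_ x x_neq0).
by rewrite Ax pmulr_lgt0 // sqnorm_gt0.
Qed.

Lemma eigenvalue_psd_ge0 d (A : 'M[R]_d) a : eigenvalue A a ->
  (forall x, 0 <= qform A x) -> 0 <= a.
Proof.
move=> /eigenvalue_qform[x x_neq0 Ax] /(_ x).
by rewrite Ax pmulr_lge0 // sqnorm_gt0.
Qed.

End QuadraticForm.

Section SymmetricSpectral.
Variable R : rcfType.
Local Notation C := R[i].
Local Notation toC := (real_complex R).
Local Open Scope sesquilinear_scope.

Lemma unitarymx_tmul d (P : 'M[C]_d) : P \is unitarymx -> P^t* *m P = 1%:M.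
Proof. by move=> Pu; rewrite -[P^t*]mul1mx mulmxKtV. Qed.

Lemma conjC_real_complex (x : R) : (toC x)^* = toC x.
Proof. by apply/CrealP/complex_realP; exists x. Qed.

Lemma trmxC_real m n (A : 'M[R]_(m, n)) : (map_mx toC A)^t* = map_mx toC A^T.
Proof. by apply/matrixP => i j; rewrite !mxE conjC_real_complex. Qed.

Lemma hermitian_spectral d (M : 'M[C]_d) : M^t* = M ->
  exists P : 'M[C]_d, exists r : 'rV[R]_d,
    P \is unitarymx /\ M = P^t* *m diag_mx (map_mx toC r) *m P.
Proof.
move=> Mh; have Mherm : M \is hermsymmx.
  by apply/is_hermitianmxP; rewrite expr0 scale1r.
have Pu := spectral_unitarymx M.
exists (spectralmx M), (map_mx (@complex.Re R) (spectral_diag M)); split => //.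
have -> : map_mx toC (map_mx (@complex.Re R) (spectral_diag M)) = spectral_diag M.
  apply/matrixP => i j; rewrite !mxE.
  have /complex_realP[k ->] := mxOverP (hermitian_spectral_diag_real Mherm) i j.
  by [].
by rewrite -invmx_unitary //; apply/orthomx_spectralP/hermitian_normalmx.
Qed.

Lemma symmetric_spectral d (A : 'M[R]_d) : A^T = A ->
  exists P : 'M[C]_d, exists r : 'rV[R]_d,
    P \is unitarymx /\ map_mx toC A = P^t* *m diag_mx (map_mx toC r) *m P.
Proof. by move=> Asym; apply: hermitian_spectral; rewrite trmxC_real Asym. Qed.

Lemma diag_mx_cform d (s : 'rV[C]_d) (y : 'cV[C]_d) :
  (y^t* *m diag_mx s *m y) 0 0 = \sum_j s 0 j * `|y j 0| ^+ 2.
Proof.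
rewrite mxE; apply: eq_bigr => j _.
by rewrite mul_mx_diag !mxE normCK; ring.
Qed.

Lemma qform_spectral d (A : 'M[R]_d) (P : 'M[C]_d) (r : 'rV[R]_d) x :
  map_mx toC A = P^t* *m diag_mx (map_mx toC r) *m P ->
  toC (qform A x) = \sum_j toC (r 0 j) * `|(P *m map_mx toC x) j 0| ^+ 2.
Proof.
move=> AE.
transitivity (((map_mx toC x)^t* *m map_mx toC A *m map_mx toC x) 0 0).
  by rewrite trmxC_real -!map_mxM mxE.
set y := P *m map_mx toC x.
have -> : (map_mx toC x)^t* *m map_mx toC A *m map_mx toC x =
    y^t* *m diag_mx (map_mx toC r) *m y by rewrite AE /y trmx_mul map_mxM !mulmxA.
by rewrite diag_mx_cform; apply: eq_bigr => j _; rewrite mxE.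
Qed.

Lemma sqnorm_spectral d (P : 'M[C]_d) (x : 'cV[R]_d) : P \is unitarymx ->
  toC (sqnorm x) = \sum_j `|(P *m map_mx toC x) j 0| ^+ 2.
Proof.
move=> Pu; have := @qform_spectral d 1%:M P (const_mx 1) x.
rewrite map_const_mx rmorph1 diag_const_mx mulmx1 unitarymx_tmul //.
move=> /(_ erefl); rewrite /qform mulmx1 => ->.
by apply: eq_bigr => j _; rewrite mxE rmorph1 mul1r.
Qed.

Lemma spectral_eigenvalue d (A : 'M[R]_d) (P : 'M[C]_d) (r : 'rV[R]_d) j :
  P \is unitarymx -> map_mx toC A = P^t* *m diag_mx (map_mx toC r) *m P ->
  eigenvalue A (r 0 j).
Proof.
move=> Pu AE; rewrite -(eigenvalue_map toC); apply/eigenvalueP.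
exists (delta_mx 0 j *m P).
  rewrite AE !mulmxA mulmxtVK // -[delta_mx 0 j *m diag_mx _]rowE row_diag_mx.
  by rewrite -scalemxAl mxE.
apply/eqP => eP0; have := mulmxtVK (delta_mx 0 j : 'rV[C]_d) Pu.
by rewrite eP0 mul0mx => /matrixP/(_ 0 j)/eqP; rewrite !mxE !eqxx eq_sym oner_eq0.
Qed.

Lemma spectral_qform_le d (A : 'M[R]_d) (P : 'M[C]_d) (r : 'rV[R]_d) b x :
  P \is unitarymx -> map_mx toC A = P^t* *m diag_mx (map_mx toC r) *m P ->
  (forall j, r 0 j <= b) -> qform A x <= b * sqnorm x.
Proof.
move=> Pu AE r_le_b; rewrite -lecR rmorphM /= (qform_spectral x AE).
rewrite (sqnorm_spectral x Pu) mulr_sumr; apply: ler_sum => j _.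
by rewrite ler_wpM2r ?exprn_ge0 // lecR.
Qed.

Lemma det_pd_gt0 d (A : 'M[R]_d) : A^T = A ->
  (forall x, x != 0 -> 0 < qform A x) -> 0 < \det A.
Proof.
move=> Asym Apd; have [P [r [Pu AE]]] := symmetric_spectral Asym.
have : toC (\det A) = \prod_j toC (r 0 j).
  rewrite -det_map_mx AE !det_mulmx det_diag mulrAC -det_mulmx unitarymx_tmul //.
  by rewrite det1 mul1r; apply: eq_bigr => j _; rewrite mxE.
rewrite -rmorph_prod => /complexI ->; apply: prodr_gt0 => j _.
exact: eigenvalue_pd_gt0 (spectral_eigenvalue j Pu AE) Apd.
Qed.

Lemma cform_psd d (B : 'M[R]_d) (z : 'cV[C]_d) : B^T = B ->
  (forall x, 0 <= qform B x) -> 0 <= (z^t* *m map_mx toC B *m z) 0 0.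
Proof.
move=> Bsym Bpsd; have [P [b [Pu BE]]] := symmetric_spectral Bsym.
have -> : z^t* *m map_mx toC B *m z =
    (P *m z)^t* *m diag_mx (map_mx toC b) *m (P *m z).
  by rewrite BE trmx_mul map_mxM !mulmxA.
rewrite diag_mx_cform sumr_ge0 // => j _; rewrite mxE mulr_ge0 ?exprn_ge0 //.
by rewrite ler0c (eigenvalue_psd_ge0 (spectral_eigenvalue j Pu BE)).
Qed.

Lemma pd_factor d (A : 'M[R]_d) : A^T = A ->
  (forall x, x != 0 -> 0 < qform A x) ->
  exists2 W : 'M[C]_d, W \in unitmx & map_mx toC A = W^t* *m W.
Proof.
move=> Asym Apd; have [P [r [Pu AE]]] := symmetric_spectral Asym.
have r_gt0 j : 0 < r 0 j := eigenvalue_pd_gt0 (spectral_eigenvalue j Pu AE) Apd.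
pose s := \row_j Num.sqrt (r 0 j).
exists (diag_mx (map_mx toC s) *m P).
  rewrite unitmx_mul (unitarymx_unit Pu) andbT unitmxE det_diag unitfE.
  by apply/prodf_neq0 => j _; rewrite !mxE gt_eqF // ltcR sqrtr_gt0.
have sE : (diag_mx (map_mx toC s))^t* *m diag_mx (map_mx toC s) =
    diag_mx (map_mx toC r).
  rewrite tr_diag_mx map_diag_mx mulmx_diag; congr diag_mx; apply/matrixP => i j.
  by rewrite !mxE ord1 /= conjC_real_complex -rmorphM -expr2 sqr_sqrtr // ltW.
by rewrite AE -sE trmx_mul map_mxM !mulmxA.
Qed.

Lemma diag_mx_cform_delta d (s : 'rV[C]_d) j :
  ((delta_mx j 0 : 'cV[C]_d)^t* *m diag_mx s *m (delta_mx j 0 : 'cV[C]_d)) 0 0 = s 0 j.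
Proof.
rewrite diag_mx_cform (bigD1 j) //= big1 ?addr0 => [|k /negbTE kj].
  by rewrite mxE !eqxx normr1 expr1n mulr1.
by rewrite mxE kj normr0 expr0n mulr0.
Qed.

Lemma simultaneous_diag d (A B : 'M[R]_d) : A^T = A ->
  (forall x, x != 0 -> 0 < qform A x) -> B^T = B -> (forall x, 0 <= qform B x) ->
  exists X : 'M[C]_d, exists c : 'rV[R]_d, [/\ forall j, 0 <= c 0 j,
    map_mx toC A = X^t* *m X & map_mx toC B = X^t* *m diag_mx (map_mx toC c) *m X].
Proof.
(* Writing A = W^* W, take X = Q W where the unitary Q diagonalizes W^-* B W^-1. *)
move=> Asym Apd Bsym Bpsd; have [W Wu AE] := pd_factor Asym Apd.
set V := invmx W; have VW : V *m W = 1%:M by exact: mulVmx.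
set M := V^t* *m map_mx toC B *m V.
have Mh : M^t* = M by rewrite !trmx_mul !map_mxM trmxCK trmxC_real Bsym mulmxA.
have [Q [c [Qu ME]]] := hermitian_spectral Mh.
have BE : map_mx toC B = W^t* *m M *m W.
  by rewrite !mulmxA -map_mxM -trmx_mul VW trmx1 map_mx1 mul1mx -mulmxA VW mulmx1.
exists (Q *m W), c; split.
- move=> j; set e : 'cV[C]_d := delta_mx j 0; set u := V *m (Q^t* *m e).
  have : u^t* *m map_mx toC B *m u = e^t* *m diag_mx (map_mx toC c) *m e.
    transitivity (e^t* *m Q *m M *m (Q^t* *m e)).
      by rewrite /u /M !trmx_mul !map_mxM trmxCK !mulmxA.
    by rewrite ME !mulmxA !(mulmxtVK _ Qu).
  move=> /matrixP/(_ 0 0); rewrite diag_mx_cform_delta => cE.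
  rewrite -ler0c (_ : toC _ = map_mx toC c 0 j); last by rewrite mxE.
  by rewrite -cE cform_psd.
- by rewrite AE trmx_mul map_mxM !mulmxA -(mulmxA _ _ Q) (unitarymx_tmul Qu) mulmx1.
- by rewrite BE ME trmx_mul map_mxM !mulmxA.
Qed.

Lemma det_pencil d (A B : 'M[R]_d) : A^T = A ->
  (forall x, x != 0 -> 0 < qform A x) -> B^T = B -> (forall x, 0 <= qform B x) ->
  exists2 c : 'I_d -> R, (forall j, 0 <= c j) &
    forall t s, \det (t *: A + s *: B) = \det A * \prod_j (t + s * c j).
Proof.
move=> Asym Apd Bsym Bpsd.
have [X [c [c_ge0 AE BE]]] := simultaneous_diag Asym Apd Bsym Bpsd.
exists (fun j => c 0 j) => // t s.
have pencilE : map_mx toC (t *: A + s *: B) =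
    X^t* *m diag_mx (map_mx toC (\row_j (t + s * c 0 j))) *m X.
  have -> : diag_mx (map_mx toC (\row_j (t + s * c 0 j))) =
      toC t *: 1%:M + toC s *: diag_mx (map_mx toC c).
    apply/matrixP => i k; rewrite !mxE.
    by case: (i == k); rewrite ?mulr1n ?mulr0n ?mulr1 ?mulr0 ?addr0 // rmorphD rmorphM.
  rewrite mulmxDr mulmxDl -!scalemxAr -!scalemxAl mulmx1 -AE -BE.
  by apply/matrixP => i j; rewrite !mxE rmorphD !rmorphM.
have := congr1 determinant pencilE.
rewrite det_map_mx det_mulmx det_mulmx det_diag mulrAC -det_mulmx -AE det_map_mx.
move=> detE; apply: complexI; rewrite detE rmorphM rmorph_prod; congr (_ * _).
by apply: eq_bigr => j _; rewrite !mxE.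
Qed.

End SymmetricSpectral.

Section LambdaMax.
Variables (R : realType) (d : nat).
Hypothesis d_gt0 : (0 < d)%N.

Lemma lambda_max_le (A : 'M[R]_d) b : A^T = A ->
  (forall x, qform A x <= b * sqnorm x) -> lambda_max A <= b.
Proof.
move=> Asym Ab; have [P [r [Pu AE]]] := symmetric_spectral Asym.
apply: ge_sup => [|a /eigenvalue_le]; last exact.
by exists (r 0 (Ordinal d_gt0)); exact: spectral_eigenvalue AE.
Qed.

Lemma qform_le_lambda_max (A : 'M[R]_d) x : A^T = A ->
  qform A x <= lambda_max A * sqnorm x.
Proof.
move=> Asym; have [P [r [Pu AE]]] := symmetric_spectral Asym.
have r_bound j : r 0 j <= \sum_k `|r 0 k|.
  by rewrite (le_trans (ler_norm _)) // (bigD1 j) //= lerDl sumr_ge0.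
apply: (spectral_qform_le _ Pu AE) => j; apply: ub_le_sup; last first.
  exact: spectral_eigenvalue AE.
exists (\sum_k `|r 0 k|) => a /eigenvalue_le; apply => y.
exact: spectral_qform_le Pu AE r_bound.
Qed.

Lemma lambda_max_ge0 (A : 'M[R]_d) : A^T = A ->
  (forall x, 0 <= qform A x) -> 0 <= lambda_max A.
Proof.
move=> Asym Apsd; pose e : 'cV[R]_d := delta_mx (Ordinal d_gt0) 0.
have e_gt0 : 0 < sqnorm e.
  apply: sqnorm_gt0; apply/eqP => /matrixP/(_ (Ordinal d_gt0) 0)/eqP.
  by rewrite !mxE !eqxx oner_eq0.
by rewrite -(pmulr_lge0 _ e_gt0) (le_trans (Apsd e)) // qform_le_lambda_max.
Qed.

Lemma lambda_max_le_comb (A A1 A2 : 'M[R]_d) t s :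
  A^T = A -> A1^T = A1 -> A2^T = A2 -> 0 <= t -> 0 <= s ->
  (forall x, qform A x <= t * qform A1 x + s * qform A2 x) ->
  lambda_max A <= t * lambda_max A1 + s * lambda_max A2.
Proof.
move=> Asym A1sym A2sym t_ge0 s_ge0 Ale; apply: lambda_max_le => // x.
rewrite (le_trans (Ale x)) // mulrDl -!mulrA.
by rewrite lerD // ler_wpM2l // qform_le_lambda_max.
Qed.

End LambdaMax.

Section GeometricMean.
Variables (R : realType) (d : nat).
Hypothesis d_gt0 : (0 < d)%N.

Definition geomean (w : 'I_d -> R) : R := powR (\prod_j w j) d%:R^-1.

Lemma powR_expr_inv (a : R) : 0 <= a -> powR (a ^+ d) d%:R^-1 = a.
Proof.
move=> a_ge0; rewrite -powR_mulrn // -powRrM mulfV ?powRr1 //.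
by rewrite pnatr_eq0 -lt0n.
Qed.

Lemma geomean_cst (t : R) : 0 <= t -> geomean (fun=> t) = t.
Proof. by move=> t_ge0; rewrite /geomean prodr_const card_ord powR_expr_inv. Qed.

Lemma geomeanM (u w : 'I_d -> R) : (forall j, 0 <= u j) -> (forall j, 0 <= w j) ->
  geomean (fun j => u j * w j) = geomean u * geomean w.
Proof. by move=> u_ge0 w_ge0; rewrite /geomean big_split powRM // prodr_ge0. Qed.

Lemma geomean_le_mean (w : 'I_d -> R) : (forall j, 0 <= w j) ->
  geomean w <= (\sum_j w j) / d%:R.
Proof.
move=> w_ge0; have mean_ge0 : 0 <= (\sum_j w j) / d%:R.
  by rewrite divr_ge0 ?ler0n ?sumr_ge0.
rewrite /geomean -[X in _ <= X](powR_expr_inv mean_ge0).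
rewrite ge0_ler_powR ?invr_ge0 ?ler0n ?nnegrE ?prodr_ge0 ?exprn_ge0 //.
have := @leif_AGM _ _ [pred _ | true] _ (fun j _ => w_ge0 j).
by rewrite card_ord => /leifP; case: ifP => [_ /eqP ->|_ /ltW].
Qed.

Lemma geomeanD (u w : 'I_d -> R) : (forall j, 0 <= u j) -> (forall j, 0 <= w j) ->
  (forall j, 0 < u j + w j) -> geomean u + geomean w <= geomean (fun j => u j + w j).
Proof.
move=> u_ge0 w_ge0 uw_gt0; set v := fun j => u j + w j.
have v_gt0 j : 0 < v j := uw_gt0 j.
have v_ge0 j : 0 <= v j := ltW (v_gt0 j).
have ratio_ge0 (f : 'I_d -> R) : (forall j, 0 <= f j) -> forall j, 0 <= f j / v j.
  by move=> f_ge0 j; rewrite divr_ge0 ?v_ge0.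
have geomean_ratio (f : 'I_d -> R) : (forall j, 0 <= f j) ->
    geomean f = geomean (fun j => f j / v j) * geomean v.
  move=> f_ge0; rewrite -geomeanM; [|exact: ratio_ge0|exact: v_ge0].
  by congr geomean; apply: funext => j; rewrite divfK ?gt_eqF ?v_gt0.
rewrite (geomean_ratio u) // (geomean_ratio w) // -mulrDl ler_piMl ?powR_ge0 //.
rewrite (le_trans (lerD (geomean_le_mean (ratio_ge0 _ u_ge0))
  (geomean_le_mean (ratio_ge0 _ w_ge0)))) // -mulrDl -big_split /=.
rewrite (eq_bigr (fun=> 1)) => [|j _]; last by rewrite -mulrDl divff // gt_eqF.
by rewrite sumr_const card_ord divff // pnatr_eq0 -lt0n.
Qed.

Lemma minkowski_det (A B : 'M[R]_d) t s :
  A^T = A -> (forall x, x != 0 -> 0 < qform A x) ->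
  B^T = B -> (forall x, 0 <= qform B x) -> 0 < t -> 0 <= s ->
  t * powR (\det A) d%:R^-1 + s * powR (\det B) d%:R^-1
    <= powR (\det (t *: A + s *: B)) d%:R^-1.
Proof.
move=> Asym Apd Bsym Bpsd t_gt0 s_ge0.
have [c c_ge0 detE] := det_pencil Asym Apd Bsym Bpsd.
have detB : \det B = \det A * \prod_j c j.
  have := detE 0 1; rewrite scale0r add0r scale1r => ->.
  by under eq_bigr do rewrite add0r mul1r.
have detA_ge0 := ltW (det_pd_gt0 Asym Apd).
have sc_ge0 j : 0 <= s * c j by rewrite mulr_ge0.
rewrite detB detE !powRM ?prodr_ge0 //; last first.
  by move=> j _; rewrite addr_ge0 ?sc_ge0 ?ltW.
rewrite -/(geomean c) -/(geomean (fun j => t + s * c j)) mulrCA [t * _]mulrC -mulrDr.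
rewrite ler_wpM2l ?powR_ge0 //.
have := @geomeanD (fun=> t) (fun j => s * c j) (fun=> ltW t_gt0) sc_ge0
  (fun j => ltr_wpDr (sc_ge0 j) t_gt0).
by rewrite geomean_cst ?(ltW t_gt0) // (@geomeanM (fun=> s) c) // geomean_cst.
Qed.

Lemma det_root_concave (A B : 'M[R]_d) t : pdmx A -> pdmx B -> 0 <= t <= 1 ->
  t * powR (\det A) d%:R^-1 + (1 - t) * powR (\det B) d%:R^-1
    <= powR (\det (t *: A + (1 - t) *: B)) d%:R^-1.
Proof.
move=> [Asym Apd] [Bsym Bpd] /andP[t_ge0 t_le1].
have [->|t_neq0] := eqVneq t 0.
  by rewrite !mul0r add0r subr0 !mul1r scale0r add0r scale1r.
apply: minkowski_det => //; first exact: pd_qform_ge0.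
  by rewrite lt_def t_neq0.
by rewrite subr_ge0.
Qed.

End GeometricMean.

Section Expectation.
Variables (R : realType) (dT : measure_display) (T : measurableType dT).
Variable P : probability T R.

Lemma Lfun2_sqr_integrable (f : T -> R) : measurable_fun setT f ->
  P.-integrable setT (fun w => (f w ^+ 2)%:E) -> f \in Lfun P 2%:E.
Proof.
move=> f_meas /integrableP[_ f2_fin]; rewrite inE; apply/andP; split.
  by rewrite inE.
rewrite inE /= /finite_norm; apply: (@lty_poweRy _ _ 2) => //.
rewrite powR_Lnorm // (eq_integral (fun w => `|(f w ^+ 2)%:E|)%E) //.
by move=> w _; rewrite /comp !abse_EFin poweR_EFin powR_mulrn // normrX.
Qed.

Lemma Rintegral_sum (I : Type) (s : seq I) (f : I -> T -> R) :
  (forall i, f i \in Lfun P 1) ->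
  \int[P]_(w in setT) (\sum_(i <- s) f i w) =
    \sum_(i <- s) \int[P]_(w in setT) f i w.
Proof.
move=> f_L1; elim: s => [|i s IH].
  by under eq_Rintegral do rewrite big_nil; rewrite Rintegral_cst // mul0r big_nil.
have sum_L1 : (fun w => \sum_(j <- s) f j w) \in Lfun P 1.
  rewrite (_ : (fun w => _) = \sum_(j <- s) f j) ?rpred_sum //.
  by apply/funext => w; rewrite fct_sumE.
under eq_Rintegral do rewrite big_cons.
by rewrite RintegralD // ?IH ?big_cons //; apply/Lfun1_integrable.
Qed.

Lemma Lfun1_congr_entry n m (Z : T -> 'M[R]_(n, m)) (Q : 'M[R]_n) :
  (forall a b, (fun w => Z w a b) \in Lfun P 2%:E) ->
  forall j k, (fun w => ((Z w)^T *m Q *m Z w) j k) \in Lfun P 1.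
Proof.
move=> Z_L2 j k.
have -> : (fun w => ((Z w)^T *m Q *m Z w) j k) =
    \sum_b \sum_a Q a b \o* ((fun w => Z w a j) \* (fun w => Z w b k)).
  apply/funext => w; rewrite mxE fct_sumE; apply: eq_bigr => b _.
  rewrite mxE mulr_suml fct_sumE; apply: eq_bigr => a _.
  by rewrite !mxE /=; ring.
apply/rpred_sum => b _; apply/rpred_sum => a _.
by apply: Lfun_scale => //; exact: Lfun2_mul_Lfun1.
Qed.

Lemma qform_Lfun1 d (Y : T -> 'M[R]_d) x :
  (forall j k, (fun w => Y w j k) \in Lfun P 1) ->
  (fun w => qform (Y w) x) \in Lfun P 1.
Proof.
move=> Y_L1; rewrite (_ : (fun w => _) =
    \sum_k \sum_j (x j 0 * x k 0) \o* (fun w => Y w j k)).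
  by apply/rpred_sum => k _; apply/rpred_sum => j _; exact: Lfun_scale.
apply/funext => w; rewrite qformE fct_sumE.
by apply: eq_bigr => k _; rewrite fct_sumE.
Qed.

Lemma qform_mexpect d (Y : T -> 'M[R]_d) x :
  (forall j k, (fun w => Y w j k) \in Lfun P 1) ->
  qform (mexpect P Y) x = \int[P]_(w in setT) qform (Y w) x.
Proof.
move=> Y_L1; under eq_Rintegral do rewrite qformE.
rewrite qformE Rintegral_sum => [|k]; last first.
  rewrite (_ : (fun w => _) = \sum_j (x j 0 * x k 0) \o* (fun w => Y w j k)).
    by apply/rpred_sum => j _; exact: Lfun_scale.
  by apply/funext => w; rewrite fct_sumE.
apply: eq_bigr => k _; rewrite Rintegral_sum => [|j]; last exact: Lfun_scale.
apply: eq_bigr => j _; rewrite RintegralZr ?mxE //; exact/Lfun1_integrable.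
Qed.

End Expectation.

Section RandomCongruence.
Variables (R : realType) (dT : measure_display) (T : measurableType dT).
Variables (P : probability T R) (d : nat) (Z : T -> 'M[R]_d).
Hypothesis Z_L2 : forall a b, (fun w => Z w a b) \in Lfun P 2%:E.

Definition mexpect_congr (Q : 'M[R]_d) := mexpect P (fun w => (Z w)^T *m Q *m Z w).

Lemma mexpect_congr_sym Q : Q^T = Q -> (mexpect_congr Q)^T = mexpect_congr Q.
Proof.
move=> Qsym; apply/matrixP => i j; rewrite !mxE; apply: eq_Rintegral => w _.
have symE : ((Z w)^T *m Q *m Z w)^T = (Z w)^T *m Q *m Z w.
  by rewrite !trmx_mul trmxK Qsym mulmxA.
by rewrite -[in RHS]symE [in RHS]mxE.
Qed.

Lemma qform_congr_Lfun1 Q x : (fun w => qform Q (Z w *m x)) \in Lfun P 1.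
Proof.
under eq_fun do rewrite -qform_congr.
exact/qform_Lfun1/Lfun1_congr_entry.
Qed.

Lemma qform_mexpect_congr Q x :
  qform (mexpect_congr Q) x = \int[P]_(w in setT) qform Q (Z w *m x).
Proof.
rewrite qform_mexpect; last exact: Lfun1_congr_entry.
by under eq_Rintegral do rewrite qform_congr.
Qed.

Lemma qform_mexpect_congr_ge0 Q x : (forall y, 0 <= qform Q y) ->
  0 <= qform (mexpect_congr Q) x.
Proof. by move=> Qpsd; rewrite qform_mexpect_congr Rintegral_ge0. Qed.

Lemma qform_mexpect_congr_le_comb Q Q1 Q2 t s x :
  (forall y, qform Q y <= t * qform Q1 y + s * qform Q2 y) ->
  qform (mexpect_congr Q) x <=
    t * qform (mexpect_congr Q1) x + s * qform (mexpect_congr Q2) x.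
Proof.
move=> Q_le; rewrite !qform_mexpect_congr [t * _]mulrC [s * _]mulrC.
have f_L1 Q' := qform_congr_Lfun1 Q' x.
have f_int Q' : P.-integrable setT (EFin \o (fun w => qform Q' (Z w *m x))).
  by apply/Lfun1_integrable; exact: f_L1.
have fZ_int Q' a : P.-integrable setT (EFin \o (fun w => qform Q' (Z w *m x) * a)).
  by apply/Lfun1_integrable/Lfun_scale; last exact: f_L1.
have fZ_sum_int : P.-integrable setT (EFin \o (fun w =>
    qform Q1 (Z w *m x) * t + qform Q2 (Z w *m x) * s)).
  by apply/Lfun1_integrable; rewrite rpredD ?Lfun_scale ?f_L1.
rewrite -!RintegralZr // -RintegralD // le_Rintegral // => w _.
by rewrite [_ * t]mulrC [_ * s]mulrC; exact: Q_le.
Qed.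

End RandomCongruence.

Section FiniteSup.
Variables (R : realType) (I : finType) (f : I -> R).

Lemma le_sup_fin i : f i <= sup [set f j | j in [set: I]].
Proof.
apply: ub_le_sup; last by exists i.
exists (\sum_j `|f j|) => _ [j _ <-].
by rewrite (le_trans (ler_norm _)) // (bigD1 j) //= lerDl sumr_ge0.
Qed.

Lemma sup_fin_le (i0 : I) b : (forall i, f i <= b) ->
  sup [set f j | j in [set: I]] <= b.
Proof. by move=> f_le; apply: ge_sup => [|_ [i _ <-]]; [exists (f i0), i0|]. Qed.

End FiniteSup.

Lemma sqrtmx_sym (R : realType) d (A : 'M[R]_d) : (sqrtmx A)^T = sqrtmx A.
Proof.
rewrite /sqrtmx; case: pselect => [e|_]; last by rewrite trmx0.
by case: (cid e) => /= B [[Bsym _] _].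
Qed.

Section LambdaD.
Variables (R : realType) (dT : measure_display) (T : measurableType dT).
Variables (P : probability T R) (d n : nat).
Variables (L : 'M[R]_d) (Ls : 'I_n -> 'M[R]_d) (S : 'I_n -> T -> 'M[R]_d).
Hypotheses (d_gt0 : (0 < d)%N) (n_gt0 : (0 < n)%N).
Hypotheses (Lsym : L^T = L) (Lpsd : forall x, 0 <= qform L x).
Hypothesis S_sym : forall i w, (S i w)^T = S i w.
Hypothesis S_meas : forall i j k, measurable_fun setT (fun w => S i w j k).
Hypothesis S_sqr : forall i j k, P.-integrable setT (fun w => ((S i w j k) ^+ 2)%:E).

Let Z i w := (S i w - 1%:M) *m sqrtmx (Ls i).

Let Z_L2 i a b : (fun w => Z i w a b) \in Lfun P 2%:E.
Proof.
rewrite (_ : (fun w => _) =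
    \sum_c sqrtmx (Ls i) c b \o* (fun w => (S i w - 1%:M) a c)).
  apply/rpred_sum => [|p1 c _]; first by rewrite lee1n.
  apply: Lfun_scale; first by rewrite ler1n.
  rewrite (_ : (fun w => _) = (fun w => S i w a c) - cst ((1%:M : 'M[R]_d) a c)).
    by rewrite rpredB ?Lfun_cst ?Lfun2_sqr_integrable.
  by apply/funext => w; rewrite !mxE.
by apply/funext => w; rewrite mxE fct_sumE.
Qed.

Let lambdaDE D : lambdaD P L Ls S D =
  sup [set lambda_max (mexpect_congr P (Z i) (D *m L *m D)) | i in [set: 'I_n]].
Proof.
rewrite /lambdaD; apply/congr1/eq_imagel => i _; do 2!apply: congr1.
apply/funext => w; have Zt : (Z i w)^T = sqrtmx (Ls i) *m (S i w - 1%:M).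
  by rewrite trmx_mul sqrtmx_sym linearB /= S_sym trmx1.
by rewrite Zt !mulmxA.
Qed.

Let congr_sandwich_sym i D : D^T = D ->
  (mexpect_congr P (Z i) (D *m L *m D))^T = mexpect_congr P (Z i) (D *m L *m D).
Proof.
by move=> Dsym; apply: mexpect_congr_sym; rewrite !trmx_mul Dsym Lsym mulmxA.
Qed.

Lemma lambdaD_ge0 D : D^T = D -> 0 <= lambdaD P L Ls S D.
Proof.
move=> Dsym; rewrite lambdaDE (le_trans _ (le_sup_fin _ (Ordinal n_gt0))) //.
apply: (lambda_max_ge0 d_gt0 (congr_sandwich_sym _ Dsym)) => x.
by apply: qform_mexpect_congr_ge0 => // y; rewrite -{1}Dsym qform_congr.
Qed.

Lemma lambdaD_convex D1 D2 t : D1^T = D1 -> D2^T = D2 -> 0 <= t <= 1 ->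
  lambdaD P L Ls S (t *: D1 + (1 - t) *: D2) <=
    t * lambdaD P L Ls S D1 + (1 - t) * lambdaD P L Ls S D2.
Proof.
move=> D1sym D2sym /[dup] t01 /andP[t_ge0 t_le1].
have s_ge0 : 0 <= 1 - t by rewrite subr_ge0.
have Dtsym : (t *: D1 + (1 - t) *: D2)^T = t *: D1 + (1 - t) *: D2.
  by rewrite linearD /= !linearZ /= D1sym D2sym.
rewrite !lambdaDE; apply: (sup_fin_le (Ordinal n_gt0)) => i.
apply: le_trans (lambda_max_le_comb d_gt0 (congr_sandwich_sym i Dtsym)
  (congr_sandwich_sym i D1sym) (congr_sandwich_sym i D2sym) t_ge0 s_ge0 _) _.
- move=> x; apply: qform_mexpect_congr_le_comb => // y.
  exact: qform_sandwich_convex.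
- by rewrite lerD // ler_wpM2l // le_sup_fin.
Qed.

End LambdaD.

Section ConvexConstraints.
Variable R : realType.

Lemma pdmx_convex d (D1 D2 : 'M[R]_d) t : pdmx D1 -> pdmx D2 -> 0 <= t <= 1 ->
  pdmx (t *: D1 + (1 - t) *: D2).
Proof.
move=> [D1sym D1pd] [D2sym D2pd] /andP[t_ge0 t_le1]; split.
  by rewrite /symmx linearD /= !linearZ /= D1sym D2sym.
move=> x x_neq0; change (0 < qform (t *: D1 + (1 - t) *: D2) x).
rewrite qformD !qformZ; have := D1pd x x_neq0; have := D2pd x x_neq0.
rewrite -/(qform D1 x) -/(qform D2 x); nra.
Qed.

Lemma sandwich_le_convex d (L D1 D2 : 'M[R]_d) t :
  L^T = L -> (forall y, 0 <= qform L y) -> D1^T = D1 -> D2^T = D2 ->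
  loewner_le (D1 *m L *m D1) D1 -> loewner_le (D2 *m L *m D2) D2 -> 0 <= t <= 1 ->
  loewner_le ((t *: D1 + (1 - t) *: D2) *m L *m (t *: D1 + (1 - t) *: D2))
             (t *: D1 + (1 - t) *: D2).
Proof.
move=> Lsym Lpsd D1sym D2sym [_ D1le] [_ D2le] /[dup] t01 /andP[t_ge0 t_le1].
set Dt := t *: D1 + (1 - t) *: D2.
have Dtsym : Dt^T = Dt by rewrite linearD /= !linearZ /= D1sym D2sym.
split; first by rewrite /symmx linearB /= !trmx_mul Dtsym Lsym mulmxA.
move=> x; change (0 <= qform (Dt - Dt *m L *m Dt) x).
have := qform_sandwich_convex x Lsym Lpsd D1sym D2sym t01.
have s_ge0 : 0 <= 1 - t by rewrite subr_ge0.
have := mulr_ge0 t_ge0 (D1le x); have := mulr_ge0 s_ge0 (D2le x).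
rewrite -/(qform _ x) -/(qform _ x) !qformB qformD !qformZ; lra.
Qed.

Lemma le_convex_bound (x a b M t : R) : 0 <= t <= 1 ->
  x <= t * a + (1 - t) * b -> a <= M -> b <= M -> x <= M.
Proof. by move=> /andP[t_ge0 t_le1] x_le a_le b_le; nra. Qed.

Lemma le_convex_concave (a b l l1 l2 g g1 g2 t : R) : 0 <= t <= 1 -> 0 <= b ->
  0 <= l -> l <= t * l1 + (1 - t) * l2 -> 0 <= g -> t * g1 + (1 - t) * g2 <= g ->
  a * l1 <= b * g1 -> a * l2 <= b * g2 -> a * l <= b * g.
Proof.
move=> /andP[t_ge0 t_le1] b_ge0 l_ge0 l_le g_ge0 g_ge a1 a2.
have [a_ge0|a_lt0] := leP 0 a; last by nra.
have := ler_wpM2l a_ge0 l_le; have := ler_wpM2l b_ge0 g_ge; nra.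
Qed.

Lemma le_div_concave (m k e g g1 g2 t : R) : 0 <= t <= 1 -> 0 <= k -> 0 < e ->
  0 < g1 -> 0 < g2 -> t * g1 + (1 - t) * g2 <= g ->
  m / (g1 * e) <= k -> m / (g2 * e) <= k -> m / (g * e) <= k.
Proof.
move=> /andP[t_ge0 t_le1] k_ge0 e_gt0 g1_gt0 g2_gt0 g_ge.
have g_gt0 : 0 < g by nra.
have ke_ge0 := mulr_ge0 k_ge0 (ltW e_gt0).
rewrite !ler_pdivrMr ?mulr_gt0 // => le1 le2.
have := ler_wpM2l ke_ge0 g_ge; nra.
Qed.

End ConvexConstraints.

Theorem proposition3 (R : realType) (dT : measure_display) (T : measurableType dT)
  (P : probability T R) (d n K : nat) (eps Dinf c : R)
  (L : 'M[R]_d) (Ls : 'I_n -> 'M[R]_d) (S : 'I_n -> T -> 'M[R]_d) :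
  (0 < d)%N -> (1 <= n)%N -> (1 <= K)%N -> 0 < eps -> 0 <= c ->
  pdmx L -> (forall i, pdmx (Ls i)) ->
  (forall i w, psdmx (S i w)) ->
  (forall i j k, measurable_fun setT (fun w => S i w j k)) ->
  (forall i j k, P.-integrable setT (fun w => ((S i w j k) ^+ 2)%:E)) ->
  (forall i, mexpect P (S i) = 1%:M) ->
  convex_mxset (feasible P K eps Dinf c L Ls S).
Proof.
move=> d_gt0 n_gt0 _ eps_gt0 _ [Lsym Lpd] _ S_psd S_meas S_sqr _.
move=> D1 D2 t [D1pd DLD1 lam1 Dinf1 K1] [D2pd DLD2 lam2 Dinf2 K2] t01.
have Lpsd := pd_qform_ge0 Lpd; have S_sym i w := (S_psd i w).1.
have [[D1sym _] [D2sym _]] := (D1pd, D2pd).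
have Dtpd := pdmx_convex D1pd D2pd t01.
have lam_convex :=
  lambdaD_convex Ls d_gt0 n_gt0 Lsym Lpsd S_sym S_meas S_sqr D1sym D2sym t01.
have lam_ge0 := lambdaD_ge0 Ls d_gt0 n_gt0 Lsym Lpsd S_sym S_meas S_sqr Dtpd.1.
have root_concave := det_root_concave d_gt0 D1pd D2pd t01.
have root_gt0 D : pdmx D -> 0 < powR (\det D) d%:R^-1.
  by case=> Dsym Dpd; rewrite powR_gt0 // det_pd_gt0.
split.
- exact: Dtpd.
- exact: sandwich_le_convex.
- exact: le_convex_bound lam_convex lam1 lam2.
- apply: le_convex_concave t01 _ lam_ge0 lam_convex _ root_concave Dinf1 Dinf2.
    by rewrite mulr_ge0 ?ler0n // exprn_ge0 // ltW.
  exact/ltW/root_gt0.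
- apply: le_div_concave t01 _ _ _ _ root_concave K1 K2; rewrite ?exprn_gt0 //.
  + exact: root_gt0.
  + exact: root_gt0.
Qed.
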